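(* Let $(D,v^* )$ be a neighbor-acyclic instance such that $D$ has no source. Then $v^*$ is a 3-king of $D$, i.e., every vertex of $D$ is reachable from $v^*$ by a directed path of length at most $3$.
   Context: A tournament is a digraph with exactly one arc between every pair of distinct vertices. An instance $(D,v^* )$ (tournament $D$, vertex $v^*$) is neighbor-acyclic if $D[N_{\mathrm{in}}(v^* )]$ and $D[N_{\mathrm{out}}(v^* )]$ are both acyclic. A source is a vertex of in-degree $0$. *)

From mathcomp Require Import all_boot.
Set Implicit Arguments. Unset Strict Implicit. Unset Printing Implicit Defensive.

(* A digraph on a finite vertex type V is given by its arc relation E:
   E x y  means there is an arc x -> y. *)

Definition tournament (V : finType) (E : rel V) : Prop :=
  (forall x, ~~ E x x) /\
  (forall x y, x != y -> (E x y || E y x) && ~~ (E x y && E y x)).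

Definition in_nbhd (V : finType) (E : rel V) (v : V) : {set V} := [set u | E u v].
Definition out_nbhd (V : finType) (E : rel V) (v : V) : {set V} := [set u | E v u].

Definition induced (V : finType) (E : rel V) (A : {set V}) : rel V :=
  fun x y => [&& x \in A, y \in A & E x y].

Definition acyclic (V : finType) (E : rel V) : Prop :=
  forall x y, E x y -> ~~ connect E y x.

Definition neighbor_acyclic (V : finType) (E : rel V) (v : V) : Prop :=
  acyclic (induced E (in_nbhd E v)) /\ acyclic (induced E (out_nbhd E v)).

Definition is_source (V : finType) (E : rel V) (v : V) : Prop :=
  forall u, ~~ E u v.

(* v is a k-king: every vertex is reachable from v by a directed path of
   length at most k (a walk of length <= k; a shortest such walk is a path). *)
Definition is_king (V : finType) (E : rel V) (k : nat) (v : V) : Prop :=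
  forall w, exists s : seq V, [/\ size s <= k, path E v s & last v s = w].

From mathcomp Require Import all_boot.

(* Let w be a vertex not reached from v* in one step, so w -> v*.  Since D[N_in(v* )]
   is acyclic, w has an ancestor m inside N_in(v* ) with no in-neighbour there.
   Any in-neighbour u of m (one exists, m is not a source) lies outside
   N_in(v* ) and differs from v*, hence v* -> u, and m dominates every other
   vertex of N_in(v* ); so v* -> u -> m -> w. *)

Set Implicit Arguments.
Unset Strict Implicit.
Unset Printing Implicit Defensive.

Lemma acyclic_source_ancestor (V : finType) (F : rel V) (x : V) :
  acyclic F -> exists2 m, connect F m x & forall u, ~~ F u m.
Proof.
move=> acF.
(* An in-neighbour of an ancestor minimising the ancestor count would have strictly fewer ancestors. *)
pose anc y := [set z | connect F z y].
case: (@arg_minnP _ x (connect F ^~ x) (fun y => #|anc y|) (connect0 F x)) => m Fmx minm.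
exists m => // u; apply/negP => Fum.
have ancS : anc u \proper anc m.
  apply/properP; split.
    by apply/subsetP => z; rewrite !inE => Fzu; apply: connect_trans Fzu (connect1 Fum).
  by exists m; rewrite inE ?connect0 ?(acF _ _ Fum).
have := minm u (connect_trans (connect1 Fum) Fmx).
by rewrite leqNgt (proper_card ancS).
Qed.

Lemma connect_induced_mem (V : finType) (E : rel V) (A : {set V}) (x y : V) :
  connect (induced E A) x y -> y \in A -> x \in A.
Proof.
by case/connectP => [[_ /= ->|z s /= /andP [/and3P [] //]]].
Qed.

Section Tournament.

Variables (V : finType) (E : rel V).
Hypothesis tourE : tournament E.

Lemma tournament_asym (x y : V) : E x y -> ~~ E y x.
Proof.
move=> Exy; have [irr tot] := tourE.
have nxy : x != y by apply: contraTneq Exy => ->; apply: irr.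
by move: (tot x y nxy); rewrite Exy.
Qed.

Lemma tournament_total (x y : V) : x != y -> ~~ E x y -> E y x.
Proof.
by have [_ tot] := tourE; move=> /tot; case: (E x y); case: (E y x).
Qed.

Lemma in_nbhd_source_reached (v m : V) :
  ~ is_source E m -> m \in in_nbhd E v ->
  (forall u, u \in in_nbhd E v -> ~~ E u m) ->
  exists2 u, E v u & E u m.
Proof.
move=> srcN; rewrite inE => Emv srcI.
have [u Eum] : exists u, E u m.
  by apply/existsP; apply: contraT => /existsPn noin; case: srcN.
exists u => //; apply: tournament_total.
  by apply: contraTneq Eum => ->; apply: tournament_asym.
by apply: contraT => /negbNE Euv; move: (srcI u); rewrite inE Euv Eum => /(_ isT).
Qed.

End Tournament.

Theorem lemma3 (V : finType) (E : rel V) (vstar : V) :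
  tournament E ->
  neighbor_acyclic E vstar ->
  (forall v : V, ~ is_source E v) ->
  is_king E 3 vstar.
Proof.
move=> tourE [acI _] nosrc w.
have [->|nwv] := eqVneq w vstar; first by exists [::].
have [Evw|nEvw] := boolP (E vstar w); first by exists [:: w]; rewrite /= Evw.
have wI : w \in in_nbhd E vstar by rewrite inE (tournament_total tourE) // eq_sym.
have [m Fmw srcm] := acyclic_source_ancestor w acI.
have mI := connect_induced_mem Fmw wI.
have srcmI u : u \in in_nbhd E vstar -> ~~ E u m.
  by move=> uI; apply: contra (srcm u) => Eum; rewrite /induced uI mI Eum.
have [u Evu Eum] := in_nbhd_source_reached tourE (nosrc m) mI srcmI.
have [->|nwm] := eqVneq w m; first by exists [:: u; m]; rewrite /= Evu Eum.
have Emw : E m w := tournament_total tourE nwm (srcmI w wI).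
by exists [:: u; m; w]; rewrite /= Evu Eum Emw.
Qed.
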